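(* Let $n,G$ be positive integers with $2^n$ dividing $G$, let $H=G/2^n$, and let $X=\{A\subseteq G: |A|=H\}$. For $\mathcal A\subseteq X$ define \[\|\mathcal A\|_2=\min\{|x| : x\subseteq G \text{ and } x\not\subseteq a \text{ for all } a\in\mathcal A\}.\] Let $k$ be a natural number and let $\mathcal A\subseteq X$ be non-empty with $\|\mathcal A\|_2\geq k+1$. Then \[\frac{|\mathcal A|}{|X|}\geq \frac{(G-H)!\,(H-k)!}{(G-k)!}.\]
   Context: Natural numbers are identified with the set of their predecessors, so $G=\{0,1,\ldots,G-1\}$ and $X$ is the family of all $H$-element subsets of $G$. *)

From mathcomp Require Import all_boot all_order all_algebra.
Set Implicit Arguments. Unset Strict Implicit. Unset Printing Implicit Defensive.

Definition Xfam (G H : nat) : {set {set 'I_G}} := [set a : {set 'I_G} | #|a| == H].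

(* The default G.+1 (for an empty index range) is never used in the theorem,
   since the whole ground set G is a witness when H < G. *)
Definition norm2 (G : nat) (A : {set {set 'I_G}}) : nat :=
  \big[minn/G.+1]_(x : {set 'I_G} | [forall a in A, ~~ (x \subset a)]) #|x|.

From mathcomp Require Import all_boot all_order all_algebra.
From mathcomp Require Import ring.
Import Order.TTheory GRing.Theory Num.Theory.

Set Implicit Arguments.
Unset Strict Implicit.
Unset Printing Implicit Defensive.

(* Since k < ||A||_2, every k-subset of G lies in some member of A (and
   k <= H, as an (H+1)-subset lies in none). Double counting the pairs (x, a)
   with |x| = k and x \subset a \in A gives C(G, k) <= |A| C(H, k), and
   C(G, k) / (C(H, k) C(G, H)) is exactly (G-H)! (H-k)! / (G-k)!. *)

Section Covering.

Variables (T : finType) (A : {set {set T}}) (H k : nat).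
Hypothesis cardA : forall a, a \in A -> #|a| = H.
Hypothesis coverA : forall x : {set T}, #|x| = k -> exists2 a, a \in A & x \subset a.

Lemma bin_leq_card_mul_bin : 'C(#|T|, k) <= #|A| * 'C(H, k).
Proof.
rewrite -card_draws -sum1_card.
apply: (@leq_trans (\sum_(x in [set B : {set T} | #|B| == k])
                      \sum_(a in A) (x \subset a : nat))).
  apply: leq_sum => x; rewrite inE => /eqP /coverA [a aA xa].
  by rewrite (bigD1 a) //= xa leq_addr.
rewrite exchange_big /= -sum_nat_const; apply: leq_sum => a aA.
rewrite -(cardA aA) -cards_draws -sum1_card big_mkcond [X in _ <= X]big_mkcond /=.
by apply: leq_sum => x _; rewrite !inE; case: (x \subset a); case: (#|x| == k).
Qed.

End Covering.

Lemma norm2_leq_card G (A : {set {set 'I_G}}) (x : {set 'I_G}) :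
  [forall a in A, ~~ (x \subset a)] -> norm2 A <= #|x|.
Proof.
move=> Ax; rewrite /norm2.
have : x \in index_enum {set 'I_G} by rewrite mem_index_enum.
elim: (index_enum _) => [|y r IHr] //; rewrite inE big_cons.
case/orP => [/eqP <-|xr]; first by rewrite Ax geq_minl.
case: ifP => _; last exact: IHr.
exact: leq_trans (geq_minr _ _) (IHr xr).
Qed.

Lemma norm2_cover G (A : {set {set 'I_G}}) (x : {set 'I_G}) :
  #|x| < norm2 A -> exists2 a, a \in A & x \subset a.
Proof.
move=> x_lt; have : ~~ [forall a in A, ~~ (x \subset a)].
  by apply: contraTN x_lt => /norm2_leq_card; rewrite leqNgt.
by rewrite negb_forall => /existsP[a]; rewrite negb_imply negbK => /andP[]; exists a.
Qed.

Lemma norm2_leq_succ G H (A : {set {set 'I_G}}) :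
  A \subset Xfam G H -> H < G -> norm2 A <= H.+1.
Proof.
move=> AX HG; rewrite leqNgt; apply/negP => succ_lt.
have [x] : exists x : {set 'I_G}, x \in [set B : {set 'I_G} | #|B| == H.+1].
  by apply/card_gt0P; rewrite card_draws card_ord bin_gt0.
rewrite inE => /eqP xH; have [|a aA xa] := @norm2_cover G A x; first by rewrite xH.
have := subset_leq_card xa; move: (subsetP AX a aA); rewrite inE => /eqP ->.
by rewrite xH ltnn.
Qed.

Lemma card_Xfam G H : #|Xfam G H| = 'C(G, H).
Proof. by rewrite /Xfam card_draws card_ord. Qed.

Lemma fact_mul_bin_mul_bin G H k : k <= H -> H <= G ->
  (G - H)`! * (H - k)`! * 'C(G, H) * 'C(H, k) = 'C(G, k) * (G - k)`!.
Proof.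
move=> kH HG; apply/eqP; rewrite -(@eqn_pmul2r (k`! * H`!)) ?muln_gt0 ?fact_gt0 //.
have bGH := bin_fact HG; have bHk := bin_fact kH.
have bGk := bin_fact (leq_trans kH HG).
apply/eqP; transitivity ('C(G, H) * (H`! * (G - H)`!) * ('C(H, k) * (k`! * (H - k)`!))).
  ring.
by rewrite bGH bHk -bGk; ring.
Qed.

Theorem proposition4p6 (n G : nat) (A : {set {set 'I_G}}) (k : nat) :
  0 < n -> 0 < G -> 2 ^ n %| G ->
  A \subset Xfam G (G %/ 2 ^ n) ->
  A != set0 ->
  k.+1 <= norm2 A ->
  ((((G - G %/ 2 ^ n)`! * (G %/ 2 ^ n - k)`!)%:R / (G - k)`!%:R : rat)
     <= #|A|%:R / #|Xfam G (G %/ 2 ^ n)|%:R)%R.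
Proof.
move=> n_gt0 G_gt0 _ AX _ k_lt.
set H := G %/ 2 ^ n.
have HG : H < G by apply: ltn_Pdiv; rewrite // -{1}(expn0 2) ltn_exp2l.
have kH : k <= H := leq_trans k_lt (norm2_leq_succ AX HG).
have cardA a : a \in A -> #|a| = H by move/(subsetP AX); rewrite inE => /eqP.
have count : 'C(G, k) <= #|A| * 'C(H, k).
  rewrite -[G in 'C(G, _)]card_ord; apply: bin_leq_card_mul_bin cardA _ => x xk.
  by apply: norm2_cover; rewrite xk.
rewrite card_Xfam ler_pdivrMr ?ltr0n ?fact_gt0 // mulrAC.
rewrite ler_pdivlMr ?ltr0n ?bin_gt0 ?(ltnW HG) // -!natrM ler_nat.
rewrite -(@leq_pmul2r 'C(H, k)) ?bin_gt0 // fact_mul_bin_mul_bin ?(ltnW HG) //.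
by rewrite mulnAC leq_pmul2r ?fact_gt0.
Qed.
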